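(* Every compact ultrametric space $(X,d)$ is $1$-monotone, i.e. there exists a linear order $<$ on $X$ such that $\operatorname{diam}(\{x\in X: a\le x\le b\})\le d(a,b)$ for all $a,b\in X$.
   Context: An ultrametric space is a metric space $(X,d)$ satisfying $d(x,y)\le\max(d(x,z),d(y,z))$ for all $x,y,z\in X$. A metric space is $C$-monotone if there is a linear order $<$ on it with $\operatorname{diam}([a,b])\le C\,d(a,b)$ for all $a,b$, where $[a,b]=\{x: a\le x\le b\}$. *)

From Stdlib Require Import Reals List.
Open Scope R_scope.

Definition is_metric {X : Type} (d : X -> X -> R) : Prop :=
  (forall x y, 0 <= d x y) /\
  (forall x y, d x y = 0 <-> x = y) /\
  (forall x y, d x y = d y x) /\
  (forall x y z, d x z <= d x y + d y z).

Definition is_ultrametric {X : Type} (d : X -> X -> R) : Prop :=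
  is_metric d /\ forall x y z, d x y <= Rmax (d x z) (d y z).

Definition metric_open {X : Type} (d : X -> X -> R) (U : X -> Prop) : Prop :=
  forall x, U x -> exists r, 0 < r /\ forall y, d x y < r -> U y.

Definition metric_compact {X : Type} (d : X -> X -> R) : Prop :=
  forall (I : Type) (U : I -> X -> Prop),
    (forall i, metric_open d (U i)) ->
    (forall x, exists i, U i x) ->
    exists l : list I, forall x, exists i, In i l /\ U i x.

Definition linear_order {X : Type} (le : X -> X -> Prop) : Prop :=
  (forall x, le x x) /\
  (forall x y, le x y -> le y x -> x = y) /\
  (forall x y z, le x y -> le y z -> le x z) /\
  (forall x y, le x y \/ le y x).

Definition interval {X : Type} (le : X -> X -> Prop) (a b : X) : X -> Prop :=
  fun x => le a x /\ le x b.

Definition diam_le {X : Type} (d : X -> X -> R) (S : X -> Prop) (r : R) : Prop :=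
  forall x y, S x -> S y -> d x y <= r.

Definition monotone_space {X : Type} (d : X -> X -> R) (C : R) : Prop :=
  exists le : X -> X -> Prop, linear_order le /\
    forall a b, diam_le d (interval le a b) (C * d a b).

From Stdlib Require Import Reals.
From Stdlib Require Import Lra Lia List IndefiniteDescription Classical.
Open Scope R_scope.

(* In an ultrametric space, for each radius r > 0 the open
   r-balls partition X, and compactness makes this partition finite: fixing
   a finite r-net c_0, ..., c_n, the label of x at scale r is the least i
   with d(c_i, x) < r, and two points get the same label iff d(x,y) < r.
   Given such labellings for every scale, order x < y iff the label of x is
   smaller than the label of y at the scale r = d(x,y) itself.  Points closer
   than r to x resp. y are compared in the same way (stability), which yields
   transitivity, and shows that a <= x <= b forces d(a,x) <= d(a,b); the
   ultrametric inequality then bounds the diameter of [a,b] by d(a,b). *)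

Section Ultrametric.

Variables (X : Type) (d : X -> X -> R).
Hypothesis d_nonneg : forall x y, 0 <= d x y.
Hypothesis d_eq0 : forall x y, d x y = 0 <-> x = y.
Hypothesis d_sym : forall x y, d x y = d y x.
Hypothesis d_ultra : forall x y z, d x y <= Rmax (d x z) (d y z).

Lemma ball_trans x y z r : d x z < r -> d y z < r -> d x y < r.
Proof. intros; destruct (proj1 (Rmax_Rle _ _ _) (d_ultra x y z)); lra. Qed.

Lemma isosceles x y z : d x y < d x z -> d y z = d x z.
Proof.
  intro Hlt. apply Rle_antisym.
  - destruct (proj1 (Rmax_Rle _ _ _) (d_ultra y z x));
      rewrite ?(d_sym y x), ?(d_sym z x) in *; lra.
  - destruct (proj1 (Rmax_Rle _ _ _) (d_ultra x z y));
      rewrite ?(d_sym z y) in *; lra.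
Qed.

Lemma dist_refl x : d x x = 0.
Proof. apply d_eq0; reflexivity. Qed.

Lemma dist_pos x y : x <> y -> 0 < d x y.
Proof.
  intro Hxy; destruct (d_nonneg x y) as [|E]; auto.
  exfalso; apply Hxy, d_eq0; auto.
Qed.

Fixpoint ball_index (r : R) (l : list X) (x : X) : nat :=
  match l with
  | nil => 0%nat
  | c :: l' => if Rlt_dec (d c x) r then 0%nat else S (ball_index r l' x)
  end.

Lemma ball_index_close r l x y : d x y < r -> ball_index r l x = ball_index r l y.
Proof.
  intro Hxy; induction l as [|c l IH]; simpl; auto.
  destruct (Rlt_dec (d c x) r) as [Hx|Hx], (Rlt_dec (d c y) r) as [Hy|Hy]; auto.
  - exfalso; apply Hy, ball_trans with x; rewrite ?(d_sym y x); auto.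
  - exfalso; apply Hx, ball_trans with y; auto.
Qed.

Lemma ball_index_far r l x y : (exists c, In c l /\ d c x < r) ->
  ball_index r l x = ball_index r l y -> d x y < r.
Proof.
  induction l as [|c l IH]; simpl; [intros [c [[] _]]|].
  intros [c' [Hin Hc']].
  destruct (Rlt_dec (d c x) r), (Rlt_dec (d c y) r); intro E; try discriminate.
  - apply ball_trans with c; rewrite d_sym; auto.
  - apply IH; [|lia]. destruct Hin as [->|Hin]; [contradiction|eauto].
Qed.

Section BallOrder.

Variable key : R -> X -> nat.
Hypothesis key_spec : forall r x y, 0 < r -> (key r x = key r y <-> d x y < r).

Definition ball_lt (x y : X) : Prop := (key (d x y) x < key (d x y) y)%nat.
Definition ball_le (x y : X) : Prop := x = y \/ ball_lt x y.

Lemma ball_lt_neq x y : ball_lt x y -> x <> y.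
Proof. unfold ball_lt; intros H ->; lia. Qed.

Lemma ball_lt_asym x y : ball_lt x y -> ~ ball_lt y x.
Proof. unfold ball_lt; rewrite (d_sym y x); lia. Qed.

Lemma ball_lt_total x y : x <> y -> ball_lt x y \/ ball_lt y x.
Proof.
  intro Hxy. unfold ball_lt; rewrite (d_sym y x).
  assert (key (d x y) x <> key (d x y) y).
  { intro E; apply key_spec in E; [lra | now apply dist_pos]. }
  lia.
Qed.

Lemma ball_lt_stable x y x' y' :
  d x x' < d x y -> d y y' < d x y -> (ball_lt x y <-> ball_lt x' y').
Proof.
  intros Hx Hy.
  assert (Hr : 0 < d x y) by (specialize (d_nonneg x x'); lra).
  assert (Exy' : d x y' = d x y).
  { rewrite (d_sym x y'), (d_sym x y); apply isosceles; rewrite (d_sym y x); lra. }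
  assert (Ex'y' : d x' y' = d x y) by (rewrite <- Exy'; apply isosceles; lra).
  unfold ball_lt; rewrite Ex'y'.
  rewrite (proj2 (key_spec _ x x' Hr) Hx), (proj2 (key_spec _ y y' Hr) Hy).
  tauto.
Qed.

Lemma ball_lt_trans x y z : ball_lt x y -> ball_lt y z -> ball_lt x z.
Proof.
  intros Hxy Hyz.
  assert (Pxy := dist_pos _ _ (ball_lt_neq _ _ Hxy)).
  destruct (Rtotal_order (d x y) (d y z)) as [Hlt|[Heq|Hgt]].
  - apply (ball_lt_stable y z x z);
      [rewrite (d_sym y x); lra | rewrite dist_refl; lra | exact Hyz].
  - (* Equal sides: the three labels at scale r are strictly increasing,
       so x and z lie in different r-balls and d(x,z) = r. *)
    unfold ball_lt in *; rewrite <- Heq in Hyz.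
    assert (Exz : d x z = d x y).
    { destruct (Rtotal_order (d x z) (d x y)) as [A|[A|A]]; auto.
      - assert (key (d x y) x = key (d x y) z) by (apply key_spec; auto). lia.
      - destruct (proj1 (Rmax_Rle _ _ _) (d_ultra x z y));
          rewrite ?(d_sym z y) in *; lra. }
    rewrite Exz; lia.
  - apply (ball_lt_stable x y x z);
      [rewrite dist_refl; lra | lra | exact Hxy].
Qed.

Lemma ball_le_linear : linear_order ball_le.
Proof.
  unfold ball_le; repeat split.
  - auto.
  - intros x y [->|A] [E|B]; auto. exfalso; exact (ball_lt_asym _ _ A B).
  - intros x y z [->|A] [<-|B]; auto. right; eapply ball_lt_trans; eauto.
  - intros x y. destruct (classic (x = y)) as [E|N]; [auto|].
    destruct (ball_lt_total x y N); auto.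
Qed.

Lemma ball_le_convex a x b : ball_le a x -> ball_le x b -> d a x <= d a b.
Proof.
  intros Hax Hxb. destruct (Rle_lt_dec (d a x) (d a b)) as [|C]; auto.
  exfalso. pose proof (d_nonneg a b).
  assert (Nax : a <> x) by (intros <-; rewrite dist_refl in C; lra).
  assert (Nxb : x <> b) by (intros ->; lra).
  destruct Hax as [|Hax]; [contradiction|]. destruct Hxb as [|Hxb]; [contradiction|].
  apply (ball_lt_asym x b Hxb), (ball_lt_stable a x b x);
    [lra | rewrite dist_refl; lra | exact Hax].
Qed.

Lemma ball_le_intervals a b : diam_le d (interval ball_le a b) (1 * d a b).
Proof.
  intros x y [Hax Hxb] [Hay Hyb].
  pose proof (ball_le_convex _ _ _ Hax Hxb). pose proof (ball_le_convex _ _ _ Hay Hyb).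
  destruct (proj1 (Rmax_Rle _ _ _) (d_ultra x y a));
    rewrite ?(d_sym x a), ?(d_sym y a) in *; lra.
Qed.

End BallOrder.

End Ultrametric.

Lemma compact_finite_net (X : Type) (d : X -> X -> R) :
  is_metric d -> metric_compact d -> forall r, 0 < r ->
  exists l : list X, forall x, exists c, In c l /\ d c x < r.
Proof.
  intros [_ [d_eq0 [_ d_tri]]] Hc r Hr.
  destruct (Hc X (fun c y => d c y < r)) as [l Hl].
  - intros c y Hy. exists (r - d c y). split; [lra|].
    intros z Hz. pose proof (d_tri c y z). lra.
  - intro x. exists x. replace (d x x) with 0 by (symmetry; apply d_eq0; auto). lra.
  - exists l. intro x. destruct (Hl x) as [i [Hi Hu]]. eauto.
Qed.

Lemma ultrametric_ball_labelling (X : Type) (d : X -> X -> R) :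
  is_ultrametric d -> metric_compact d ->
  exists key : R -> X -> nat,
    forall r x y, 0 < r -> (key r x = key r y <-> d x y < r).
Proof.
  intros [Hm d_ultra] Hc. pose proof Hm as [_ [_ [d_sym _]]].
  destruct (functional_choice (fun r (l : list X) =>
              0 < r -> forall x, exists c, In c l /\ d c x < r)) as [net Hnet].
  { intro r. destruct (Rlt_dec 0 r) as [Hr|Hr].
    - destruct (compact_finite_net X d Hm Hc r Hr) as [l Hl]; eauto.
    - exists nil; intro; lra. }
  exists (fun r => ball_index X d r (net r)). intros r x y Hr; split.
  - apply ball_index_far; auto.
  - apply ball_index_close; auto.
Qed.

Theorem lemma2p3 (X : Type) (d : X -> X -> R) :
  is_ultrametric d -> metric_compact d -> monotone_space d 1.
Proof.
  intros Hum Hc.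
  destruct (ultrametric_ball_labelling X d Hum Hc) as [key key_spec].
  destruct Hum as [[d_nonneg [d_eq0 [d_sym _]]] d_ultra].
  exists (ball_le X d key). split.
  - apply ball_le_linear; auto.
  - intros a b; apply ball_le_intervals; auto.
Qed.
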